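(* Let $\lambda\in(0,1/e)$, $\gamma>0$, $A\subset\mathbb{C}$, and let $f$ be a bilipschitz mapping, i.e. there exist $0<c<C<\infty$ with $c\leq|f(x)-f(y)|/|x-y|\leq C$ for all $x\neq y$. If $\mathcal{H}^{h_{\lambda,\gamma}}(A)=0$, then $\mathcal{H}^{h_{\lambda,\gamma}}(f(A))=0$; if $\mathcal{H}^{h_{\lambda,\gamma}}(A)=\infty$, then $\mathcal{H}^{h_{\lambda,\gamma}}(f(A))=\infty$.
   Context: For $\lambda\in(0,1/e)$ let $E_\lambda(z)=\lambda e^z$; it has a unique real repelling fixed point $\beta_\lambda$. Let $L_\lambda$ be the entire function with $L_\lambda(0)=\beta_\lambda$, $L_\lambda'(0)=1$ and $E_\lambda(L_\lambda(z))=L_\lambda(\beta_\lambda z)$ for all $z$, and let $\Phi_\lambda=(L_\lambda|_{\mathbb{R}})^{-1}$ (an increasing function tending to $\infty$). The gauge function is $h_{\lambda,\gamma}(t)=t^2\Phi_\lambda(1/t)^\gamma$ for small $t>0$ and $h_{\lambda,\gamma}(0)=0$. For a gauge function $h$ and $A\subset\mathbb{C}$, $\mathcal{H}^h(A)=\lim_{\delta\to0}\inf\{\sum_i h(\operatorname{diam}A_i): A\subset\bigcup_i A_i,\ \operatorname{diam}A_i<\delta\}$. *)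

From Stdlib Require Import Reals.
From Coquelicot Require Import Coquelicot.
Open Scope R_scope.

Definition Cexp (z : C) : C :=
  (exp (fst z) * cos (snd z), exp (fst z) * sin (snd z)).

Definition E_lam (lam : R) (z : C) : C := Cmult (RtoC lam) (Cexp z).

Definition entire (g : C -> C) : Prop :=
  forall z : C, ex_derive (K := C_AbsRing) (V := C_NormedModule) g z.

Definition gauge (Phi : R -> R) (gam : R) (t : R) : R :=
  if Rle_dec t 0 then 0 else t ^ 2 * Rpower (Phi (/ t)) gam.

(* diameter of a subset of C (diam of the empty set is 0) *)
Definition diam (A : C -> Prop) : Rbar :=
  Lub_Rbar (fun r => r = 0 \/ exists x y, A x /\ A y /\ r = Cmod (Cminus x y)).

(* H^h_delta(A): infimum of sum_i h(diam A_i) over countable covers with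
   diam A_i < delta (finite covers are included by padding with empty sets) *)
Definition Hdelta (h : R -> R) (delta : R) (A : C -> Prop) : Rbar :=
  Glb_Rbar (fun s : R => exists U : nat -> C -> Prop,
    (forall z, A z -> exists i, U i z) /\
    (forall i, Rbar_lt (diam (U i)) delta) /\
    is_series (fun i => h (real (diam (U i)))) s).

(* H^h(A) = lim_{delta -> 0} H^h_delta(A) = sup_{delta > 0} H^h_delta(A)
   (H^h_delta is nonincreasing in delta) *)
Definition Hmeas (h : R -> R) (A : C -> Prop) : Rbar :=
  Lub_Rbar (fun r => exists delta, 0 < delta /\ Rbar_le r (Hdelta h delta A)).

Definition image (f : C -> C) (A : C -> Prop) : C -> Prop :=
  fun w => exists z, A z /\ w = f z.

From Stdlib Require Import Reals Lra Classical ClassicalEpsilon.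
From Coquelicot Require Import Coquelicot.
Open Scope R_scope.

(* If g is Lc-Lipschitz on X, a cover of X by sets U_i of diameter d_i yields a
   cover of g(X) by the sets g(X ∩ U_i) ∪ (g(X ∩ U_i) + d_i), whose diameters t_i
   satisfy d_i <= t_i <= (Lc + 1) d_i unless X ∩ U_i is empty.  Since Phi is eventually
   positive and increasing, h(t) = t^2 Phi(1/t)^gamma obeys h(t) <= (Lc + 1)^2 h(d)
   for such t and small d, so H^h(g(X)) <= (Lc + 1)^2 H^h(X).  Applying this to f
   and to its inverse on f(A) gives both claims.  Phi is eventually positive and
   increasing because L is real, continuous and injective on the real line,
   with L(0) = beta, L'(0) = 1, and L(beta^n x) grows at least linearly in n by
   the functional equation L(beta x) = lambda e^(L x). *)

Lemma Cmod_Cminus_shift (u v : C) (r s : R) :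
  Cmod (Cminus (Cplus u (RtoC r)) (Cplus v (RtoC s))) <= Cmod (Cminus u v) + Rabs (r - s).
Proof.
  replace (Cminus (Cplus u (RtoC r)) (Cplus v (RtoC s)))
    with (Cplus (Cminus u v) (RtoC (r - s))) by (rewrite RtoC_minus; ring).
  rewrite <- Cmod_R. apply Cmod_triangle.
Qed.

Lemma Cmod_Cminus_shift_same (u : C) (r s : R) :
  Cmod (Cminus (Cplus u (RtoC r)) (Cplus u (RtoC s))) = Rabs (r - s).
Proof.
  replace (Cminus (Cplus u (RtoC r)) (Cplus u (RtoC s))) with (RtoC (r - s))
    by (rewrite RtoC_minus; ring).
  apply Cmod_R.
Qed.

Lemma Cmod_Cminus_diag (x : C) : Cmod (Cminus x x) = 0.
Proof. replace (Cminus x x) with (RtoC 0) by ring. apply Cmod_0. Qed.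

Lemma Cmod_Cminus_gt0 (x y : C) : x <> y -> 0 < Cmod (Cminus x y).
Proof. intros Hxy. apply Cmod_gt_0. intros E. apply Hxy, Ceq_minus, E. Qed.

Lemma diam_ge0 (U : C -> Prop) : Rbar_le 0 (diam U).
Proof. apply Lub_Rbar_correct. left; reflexivity. Qed.

Lemma Cmod_le_diam (U : C -> Prop) (x y : C) :
  U x -> U y -> Rbar_le (Cmod (Cminus x y)) (diam U).
Proof. intros Hx Hy. apply Lub_Rbar_correct. right; exists x, y; auto. Qed.

Lemma diam_le (U : C -> Prop) (d : R) :
  0 <= d -> (forall x y, U x -> U y -> Cmod (Cminus x y) <= d) -> Rbar_le (diam U) d.
Proof.
  intros Hd H. apply Lub_Rbar_correct.
  intros r [->|[x [y [Hx [Hy ->]]]]]; simpl; auto.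
Qed.

Lemma diam_finite (U : C -> Prop) (d : R) :
  Rbar_le (diam U) d -> diam U = Finite (real (diam U)).
Proof. intros H. pose proof (diam_ge0 U). destruct (diam U); simpl in *; easy. Qed.

Lemma is_series_nonneg (a : nat -> R) (s : R) :
  (forall n, 0 <= a n) -> is_series a s -> 0 <= s.
Proof.
  intros Ha Hs. rewrite <- (is_series_unique _ _ Hs).
  replace 0 with (Series (fun n => 0 * a n)) by (rewrite Series_scal_l; ring).
  apply Series_le; [|eexists; exact Hs].
  intros n. specialize (Ha n). lra.
Qed.

Lemma is_series_le_scal (a b : nat -> R) (K s : R) :
  (forall n, 0 <= a n <= K * b n) -> is_series b s ->
  exists s', is_series a s' /\ s' <= K * s.
Proof.
  intros H Hb.
  assert (HKb : is_series (fun n => K * b n) (K * s)) by exact (is_series_scal_l K b s Hb).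
  assert (Ea : ex_series a).
  { apply (ex_series_le a (fun n => K * b n)); [|eexists; exact HKb].
    intros n. change (norm (a n)) with (Rabs (a n)). rewrite Rabs_pos_eq; apply H. }
  exists (Series a). split; [now apply Series_correct|].
  rewrite <- (is_series_unique _ _ HKb). apply Series_le; auto. eexists; exact HKb.
Qed.

Definition is_cover_sum (h : R -> R) (delta : R) (X : C -> Prop) (s : R) : Prop :=
  exists U : nat -> C -> Prop,
    (forall z, X z -> exists i, U i z) /\
    (forall i, Rbar_lt (diam (U i)) delta) /\
    is_series (fun i => h (real (diam (U i)))) s.

Lemma Hdelta_le_cover_sum (h : R -> R) (delta : R) (X : C -> Prop) (s : R) :
  is_cover_sum h delta X s -> Rbar_le (Hdelta h delta X) s.
Proof. apply (Glb_Rbar_correct (is_cover_sum h delta X)). Qed.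

Lemma Hdelta_ge (h : R -> R) (delta : R) (X : C -> Prop) (m : R) :
  (forall s, is_cover_sum h delta X s -> m <= s) -> Rbar_le m (Hdelta h delta X).
Proof. intros H. apply (Glb_Rbar_correct (is_cover_sum h delta X)). exact H. Qed.

Lemma cover_sum_lt_of_Hdelta_lt (h : R -> R) (delta : R) (X : C -> Prop) (m : R) :
  Rbar_lt (Hdelta h delta X) m -> exists s, is_cover_sum h delta X s /\ s < m.
Proof.
  intros Hm. apply NNPP. intros Hn. apply (Rbar_lt_not_le _ _ Hm).
  apply Hdelta_ge. intros s Hs. apply Rnot_lt_le. intros Hsm. apply Hn. now exists s.
Qed.

Lemma Hdelta_le_Hmeas (h : R -> R) (delta : R) (X : C -> Prop) :
  0 < delta -> Rbar_le (Hdelta h delta X) (Hmeas h X).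
Proof.
  intros Hd.
  assert (Hub : forall r : R, Rbar_le r (Hdelta h delta X) -> Rbar_le r (Hmeas h X)).
  { intros r Hr. apply Lub_Rbar_correct. now exists delta. }
  destruct (Hdelta h delta X) as [v| |] eqn:E.
  - apply Hub. apply Rbar_le_refl.
  - destruct (Hmeas h X) as [m| |] eqn:Em; simpl; auto.
    + specialize (Hub (m + 1) I). simpl in Hub. lra.
    + exact (Hub 0 I).
  - exact I.
Qed.

Lemma Hmeas_ge0 (h : R -> R) (X : C -> Prop) :
  (forall t, 0 <= h t) -> Rbar_le 0 (Hmeas h X).
Proof.
  intros hpos. apply Lub_Rbar_correct. exists 1. split; [lra|].
  apply Hdelta_ge. intros s [U [_ [_ Hs]]].
  apply (is_series_nonneg _ _ (fun i => hpos _) Hs).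
Qed.

Definition cover_transfer (h : R -> R) (X Y : C -> Prop) (K : R) : Prop :=
  forall delta, 0 < delta -> exists delta', 0 < delta' /\
    forall s, is_cover_sum h delta' X s ->
      exists s', is_cover_sum h delta Y s' /\ s' <= K * s.

Lemma Hmeas_le_of_cover_transfer (h : R -> R) (X Y : C -> Prop) (K : R) :
  0 <= K -> cover_transfer h X Y K ->
  forall M : R, Rbar_le (Hmeas h X) M -> Rbar_le (Hmeas h Y) (K * M).
Proof.
  intros HK T M HM. apply Lub_Rbar_correct. intros r [delta [Hd Hr]]. simpl.
  destruct (T delta Hd) as [delta' [Hd' Hc]].
  apply Rnot_lt_le. intros Hlt.
  set (e := (r - K * M) / (K + 1)).
  assert (He : 0 < e) by (apply Rdiv_lt_0_compat; lra).
  destruct (cover_sum_lt_of_Hdelta_lt h delta' X (M + e)) as [s [Hs Hse]].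
  { eapply Rbar_le_lt_trans; [apply Hdelta_le_Hmeas; exact Hd'|].
    eapply Rbar_le_lt_trans; [exact HM|]. simpl. lra. }
  destruct (Hc s Hs) as [s' [Hs' Hss']].
  assert (Hrs : Rbar_le r s')
    by (eapply Rbar_le_trans; [exact Hr|apply Hdelta_le_cover_sum; exact Hs']).
  simpl in Hrs.
  assert (HKe : K * e < r - K * M).
  { unfold e. apply Rmult_lt_reg_r with (K + 1); [lra|].
    field_simplify; [nra|lra]. }
  assert (K * s <= K * (M + e)) by (apply Rmult_le_compat_l; lra).
  lra.
Qed.

Definition doubling_near0 (h : R -> R) (b : R) : Prop :=
  exists delta0 K, 0 < delta0 /\ 0 <= K /\
    forall d t, 0 <= d < delta0 -> d <= t <= b * d -> h t <= K * h d.

Definition padded_image (g : C -> C) (X U : C -> Prop) (d : R) : C -> Prop :=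
  fun w => exists x e, X x /\ U x /\ (e = 0 \/ e = d) /\ w = Cplus (g x) (RtoC e).

Section LipschitzImage.
Variables (g : C -> C) (X : C -> Prop) (Lc : R).
Hypothesis HLc : 0 <= Lc.
Hypothesis g_lipschitz :
  forall x y, X x -> X y -> Cmod (Cminus (g x) (g y)) <= Lc * Cmod (Cminus x y).

Lemma padded_image_diam (U : C -> Prop) (d : R) :
  diam U = Finite d ->
  Rbar_le (diam (padded_image g X U d)) ((Lc + 1) * d) /\
  (real (diam (padded_image g X U d)) = 0 \/ d <= real (diam (padded_image g X U d))).
Proof.
  intros E.
  assert (Hd : 0 <= d) by (pose proof (diam_ge0 U) as H; rewrite E in H; exact H).
  assert (HU : forall x y, U x -> U y -> Cmod (Cminus x y) <= d).
  { intros x y Hx Hy. pose proof (Cmod_le_diam U x y Hx Hy) as H. rewrite E in H. exact H. }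
  assert (Hup : Rbar_le (diam (padded_image g X U d)) ((Lc + 1) * d)).
  { apply diam_le; [nra|].
    intros w1 w2 [x1 [e1 [HX1 [HU1 [He1 ->]]]]] [x2 [e2 [HX2 [HU2 [He2 ->]]]]].
    eapply Rle_trans; [apply Cmod_Cminus_shift|].
    assert (Rabs (e1 - e2) <= d).
    { destruct He1 as [-> | ->], He2 as [-> | ->];
        rewrite ?Rminus_diag, ?Rabs_R0, ?Rminus_0_l, ?Rabs_Ropp, ?Rminus_0_r, ?Rabs_pos_eq;
        lra. }
    pose proof (g_lipschitz x1 x2 HX1 HX2). pose proof (HU x1 x2 HU1 HU2). nra. }
  split; [exact Hup|].
  pose proof (diam_finite _ _ Hup) as Ef.
  destruct (classic (exists x, X x /\ U x)) as [[x [HXx HUx]]|Hempty].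
  - right. pose proof (Cmod_le_diam (padded_image g X U d)
      (Cplus (g x) (RtoC 0)) (Cplus (g x) (RtoC d))) as H.
    rewrite Cmod_Cminus_shift_same, Rminus_0_l, Rabs_Ropp, Rabs_pos_eq, Ef in H by exact Hd.
    apply H; exists x; [exists 0|exists d]; auto.
  - left. apply Rle_antisym.
    + assert (H : Rbar_le (diam (padded_image g X U d)) 0).
      { apply diam_le; [lra|]. intros w1 w2 [x1 [e1 [HX1 [HU1 _]]]].
        exfalso. apply Hempty. now exists x1. }
      rewrite Ef in H. exact H.
    + pose proof (diam_ge0 (padded_image g X U d)) as H. rewrite Ef in H. exact H.
Qed.

Lemma lipschitz_cover_transfer (h : R -> R) (Y : C -> Prop) :
  (forall y, Y y -> exists x, X x /\ y = g x) ->
  (forall t, 0 <= h t) -> h 0 = 0 -> doubling_near0 h (Lc + 1) ->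
  exists K, 0 <= K /\ cover_transfer h X Y K.
Proof.
  intros HY hpos h0 [d0 [K [Hd0 [HK Hdbl]]]].
  exists K. split; [exact HK|]. intros delta Hdelta.
  exists (Rmin (delta / (Lc + 1)) d0). split.
  { apply Rmin_pos; [apply Rdiv_lt_0_compat; lra|exact Hd0]. }
  intros s [U [Hcov [Hdiam Hs]]].
  set (V := fun i => padded_image g X (U i) (real (diam (U i)))).
  assert (Key : forall i, Rbar_lt (diam (V i)) delta /\
                          h (real (diam (V i))) <= K * h (real (diam (U i)))).
  { intros i. unfold V. pose proof (Hdiam i) as Hi.
    assert (E : diam (U i) = Finite (real (diam (U i))))
      by (apply (diam_finite _ _ (Rbar_lt_le _ _ Hi))).
    set (d := real (diam (U i))) in *.
    rewrite E in Hi. simpl in Hi.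
    assert (Hd_delta : (Lc + 1) * d < delta).
    { assert (d < delta / (Lc + 1)) by (eapply Rlt_le_trans; [exact Hi|apply Rmin_l]).
      apply Rmult_lt_reg_r with (/ (Lc + 1)); [apply Rinv_0_lt_compat; lra|].
      replace ((Lc + 1) * d * / (Lc + 1)) with d by (field; lra).
      exact H. }
    assert (Hd_d0 : d < d0) by (eapply Rlt_le_trans; [exact Hi|apply Rmin_r]).
    assert (Hd0' : 0 <= d) by (pose proof (diam_ge0 (U i)) as H; rewrite E in H; exact H).
    destruct (padded_image_diam (U i) d E) as [Hup Hlow].
    rewrite (diam_finite _ _ Hup) in Hup |- *. simpl in Hup |- *.
    split; [lra|].
    destruct Hlow as [-> | Hdt].
    - rewrite h0. pose proof (hpos d). nra.
    - apply Hdbl; lra. }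
  destruct (is_series_le_scal (fun i => h (real (diam (V i))))
              (fun i => h (real (diam (U i)))) K s) as [s' [Hs' Hle]]; auto.
  { intros n. split; [apply hpos|apply Key]. }
  exists s'. split; [|exact Hle]. exists V. split; [|split; [apply Key|exact Hs']].
  intros w Hw. destruct (HY w Hw) as [x [HXx ->]]. destruct (Hcov x HXx) as [i Hi].
  exists i, x, 0. repeat split; auto. now rewrite Cplus_0_r.
Qed.

End LipschitzImage.

Definition eventually_pos_increasing (Phi : R -> R) : Prop :=
  exists Y, 0 < Y /\ forall y z, Y <= y <= z -> 0 < Phi y <= Phi z.

Lemma gauge_nonneg (Phi : R -> R) (gam t : R) : 0 <= gauge Phi gam t.
Proof.
  unfold gauge. destruct (Rle_dec t 0); [lra|].
  apply Rmult_le_pos; [apply pow2_ge_0|left; apply exp_pos].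
Qed.

Lemma gauge_0 (Phi : R -> R) (gam : R) : gauge Phi gam 0 = 0.
Proof. unfold gauge. destruct (Rle_dec 0 0); [reflexivity|lra]. Qed.

Lemma gauge_doubling (Phi : R -> R) (gam b : R) :
  eventually_pos_increasing Phi -> 0 <= gam -> 1 <= b -> doubling_near0 (gauge Phi gam) b.
Proof.
  intros [Y [HY HPhi]] Hgam Hb.
  exists (/ (b * Y)), (b ^ 2). split; [apply Rinv_0_lt_compat; nra|].
  split; [apply pow2_ge_0|].
  intros d t [Hd0 Hd] [Hdt Htb].
  destruct (Req_dec d 0) as [->|Hdn].
  { replace t with 0 by lra. rewrite gauge_0. lra. }
  assert (Hdpos : 0 < d) by lra.
  unfold gauge. destruct (Rle_dec t 0); [lra|]. destruct (Rle_dec d 0); [lra|].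
  assert (Hinv : / t <= / d) by (apply Rinv_le_contravar; lra).
  assert (HYt : Y <= / t).
  { assert (HdY : d * (b * Y) < 1).
    { apply Rmult_lt_reg_r with (/ (b * Y)); [apply Rinv_0_lt_compat; nra|].
      rewrite Rmult_assoc, Rinv_r, Rmult_1_l, Rmult_1_r by nra. exact Hd. }
    apply Rmult_le_reg_l with t; [lra|]. rewrite Rinv_r by lra. nra. }
  destruct (HPhi (/ t) (/ d)) as [Ht Htd]; [lra|].
  apply Rle_trans with ((b * d) ^ 2 * Rpower (Phi (/ d)) gam).
  - apply Rmult_le_compat.
    + apply pow2_ge_0.
    + left; apply exp_pos.
    + apply pow_incr; lra.
    + apply Rle_Rpower_l; lra.
  - right; ring.
Qed.

Lemma gauge_Hmeas_lipschitz_image_le (Phi : R -> R) (gam : R) (g : C -> C)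
    (X Y : C -> Prop) (Lc : R) :
  eventually_pos_increasing Phi -> 0 <= gam -> 0 <= Lc ->
  (forall x y, X x -> X y -> Cmod (Cminus (g x) (g y)) <= Lc * Cmod (Cminus x y)) ->
  (forall y, Y y -> exists x, X x /\ y = g x) ->
  exists K, 0 <= K /\ forall M : R,
    Rbar_le (Hmeas (gauge Phi gam) X) M -> Rbar_le (Hmeas (gauge Phi gam) Y) (K * M).
Proof.
  intros HPhi Hgam HLc Hg HY.
  destruct (lipschitz_cover_transfer g X Lc HLc Hg (gauge Phi gam) Y HY)
    as [K [HK T]].
  - apply gauge_nonneg.
  - apply gauge_0.
  - apply gauge_doubling; auto; lra.
  - exists K. split; [exact HK|]. now apply Hmeas_le_of_cover_transfer.
Qed.

Section RealInverse.
Variables (lam beta eps : R) (l Phi : R -> R).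
Hypothesis Hlam : 0 < lam.
Hypothesis Hbeta_fixed : lam * exp beta = beta.
Hypothesis Hbeta_gt1 : 1 < beta.
Hypothesis l_continuous : forall x, continuous l x.
Hypothesis Phi_l : forall x, Phi (l x) = x.
Hypothesis l_0 : l 0 = beta.
Hypothesis l_functional : forall x, l (beta * x) = lam * exp (l x).
Hypothesis Heps : 0 < eps.
Hypothesis l_eps : beta < l eps.

Lemma l_injective (a b : R) : l a = l b -> a = b.
Proof. intros H. now rewrite <- (Phi_l a), <- (Phi_l b), H. Qed.

Lemma l_ivt (a b y : R) : a <= b -> Rmin (l a) (l b) <= y <= Rmax (l a) (l b) ->
  exists x, a <= x <= b /\ l x = y.
Proof.
  intros Hab H. destruct (IVT_gen_consistent l a b y l_continuous H) as [x [Hx Hl]].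
  exists x. rewrite Rmin_left, Rmax_right in Hx by lra. auto.
Qed.

Lemma l_gt_beta (x : R) : 0 < x -> beta < l x.
Proof.
  intros Hx. destruct (Rtotal_order (l x) beta) as [Hlt|[Heq|Hgt]]; auto; exfalso.
  - assert (Hz : exists z, 0 < z /\ l z = beta).
    { destruct (Rle_dec eps x).
      - destruct (l_ivt eps x beta) as [z [Hz Hlz]]; [lra| |exists z; split; [lra|exact Hlz]].
        rewrite Rmin_right, Rmax_left by lra. lra.
      - destruct (l_ivt x eps beta) as [z [Hz Hlz]]; [lra| |exists z; split; [lra|exact Hlz]].
        rewrite Rmin_left, Rmax_right by lra. lra. }
    destruct Hz as [z [Hz Hlz]]. rewrite <- l_0 in Hlz. apply l_injective in Hlz. lra.
  - rewrite <- l_0 in Heq. apply l_injective in Heq. lra.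
Qed.

Lemma l_increasing (a b : R) : 0 <= a -> a < b -> l a < l b.
Proof.
  intros Ha Hab. destruct (Req_dec a 0) as [->|Han].
  { rewrite l_0. apply l_gt_beta; lra. }
  destruct (Rtotal_order (l a) (l b)) as [H|[H|H]]; auto; exfalso.
  - apply l_injective in H. lra.
  - assert (beta < l b) by (apply l_gt_beta; lra).
    destruct (l_ivt 0 a (l b)) as [z [Hz Hlz]]; [lra| |].
    + rewrite l_0, Rmin_left, Rmax_right by lra. lra.
    + apply l_injective in Hlz. lra.
Qed.

Lemma exp_increment_ge (u v : R) : beta <= v <= u -> beta * (u - v) <= lam * exp u - lam * exp v.
Proof.
  intros Hvu.
  assert (Hexp : exp u = exp v * exp (u - v)) by (rewrite <- exp_plus; f_equal; ring).
  assert (Hv : beta <= lam * exp v).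
  { rewrite <- Hbeta_fixed. apply Rmult_le_compat_l; [lra|].
    destruct (Req_dec beta v) as [->|]; [lra|left; apply exp_increasing; lra]. }
  pose proof (exp_ineq1_le (u - v)). rewrite Hexp. nra.
Qed.

Lemma l_step_pos : 0 < lam * exp (l eps) - l eps.
Proof. pose proof (exp_increment_ge (l eps) beta). nra. Qed.

(* L(beta x) - L(x) = lambda e^(L x) - L x is nondecreasing in L x >= beta, so the
   iterates L(beta^n eps) grow at least by a fixed positive step. *)
Lemma l_beta_pow_ge (n : nat) :
  l eps + INR n * (lam * exp (l eps) - l eps) <= l (beta ^ n * eps).
Proof.
  pose proof l_step_pos as Hstep.
  induction n as [|n IH].
  - simpl. rewrite Rmult_1_l. lra.
  - replace (beta ^ S n * eps) with (beta * (beta ^ n * eps)) by (simpl; ring).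
    rewrite l_functional, S_INR.
    assert (Hn : 0 <= INR n * (lam * exp (l eps) - l eps))
      by (apply Rmult_le_pos; [apply pos_INR|lra]).
    pose proof (exp_increment_ge (l (beta ^ n * eps)) (l eps)). nra.
Qed.

Lemma l_surjective (z : R) : beta < z -> exists x, 0 < x /\ l x = z.
Proof.
  intros Hz. pose proof l_step_pos as Hstep.
  set (step := lam * exp (l eps) - l eps) in *.
  destruct (nfloor_ex (Rabs z / step)) as [n [_ Hn]].
  { apply Rdiv_le_0_compat; [apply Rabs_pos|lra]. }
  assert (Hzn : z <= l (beta ^ S n * eps)).
  { pose proof (l_beta_pow_ge (S n)) as Hit. rewrite S_INR in Hit. fold step in Hit.
    assert (Rabs z < (INR n + 1) * step).
    { apply Rmult_lt_reg_r with (/ step); [apply Rinv_0_lt_compat; lra|].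
      replace ((INR n + 1) * step * / step) with (INR n + 1) by (field; lra). exact Hn. }
    pose proof (RRle_abs z). lra. }
  assert (Hpow : 0 < beta ^ S n * eps) by (apply Rmult_lt_0_compat; [apply pow_lt; lra|exact Heps]).
  destruct (l_ivt 0 (beta ^ S n * eps) z) as [x [Hx Hlx]]; [lra| |].
  { rewrite l_0. pose proof (l_gt_beta _ Hpow). rewrite Rmin_left, Rmax_right; lra. }
  exists x. split; [|exact Hlx].
  destruct (Req_dec x 0) as [->|]; [rewrite l_0 in Hlx; lra|lra].
Qed.

Lemma Phi_eventually_pos_increasing : eventually_pos_increasing Phi.
Proof.
  exists (beta + 1). split; [lra|]. intros y z Hyz.
  destruct (l_surjective y) as [xy [Hxy <-]]; [lra|].
  destruct (l_surjective z) as [xz [Hxz <-]]; [lra|].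
  rewrite !Phi_l. split; [exact Hxy|].
  apply Rnot_lt_le. intros Hlt. pose proof (l_increasing xz xy ltac:(lra) Hlt). lra.
Qed.

End RealInverse.

Lemma entire_Re_continuous (L : C -> C) : entire L -> forall x, continuous (fun x => Re (L (RtoC x))) x.
Proof.
  intros HL x.
  pose proof (ex_derive_continuous (K := C_AbsRing) (V := C_NormedModule) L (RtoC x) (HL _)) as Hc.
  apply filterlim_locally. intros e.
  apply filterlim_locally with (eps := e) in Hc. destruct Hc as [d Hd].
  exists d. intros y Hy. specialize (Hd (RtoC y)).
  unfold ball in *. simpl in *. unfold prod_ball, AbsRing_ball in *. simpl in *.
  apply Hd. change (Cmod (Cminus (RtoC y) (RtoC x)) < d).
  rewrite <- RtoC_minus, Cmod_R. exact Hy.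
Qed.

Lemma Re_gt_at_right (L : C -> C) (beta : R) :
  L (RtoC 0) = RtoC beta ->
  is_derive (K := C_AbsRing) (V := C_NormedModule) L (RtoC 0) (RtoC 1) ->
  (forall x : R, Im (L (RtoC x)) = 0) ->
  exists eps, 0 < eps /\ beta < Re (L (RtoC eps)).
Proof.
  intros H0 [_ Hd] HIm.
  specialize (Hd (RtoC 0) (fun P H => H) (mkposreal (1/2) ltac:(lra))).
  destruct Hd as [d Hd].
  set (e := d / 2).
  assert (He : 0 < e < d) by (unfold e; destruct d; simpl; lra).
  exists e. split; [lra|].
  specialize (Hd (RtoC e)).
  unfold ball in Hd. simpl in Hd. unfold AbsRing_ball in Hd. simpl in Hd.
  change (Cmod (Cminus (RtoC e) (RtoC 0)) < d ->
    Cmod (Cminus (Cminus (L (RtoC e)) (L (RtoC 0))) (Cmult (Cminus (RtoC e) (RtoC 0)) (RtoC 1)))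
      <= 1 / 2 * Cmod (Cminus (RtoC e) (RtoC 0))) in Hd.
  rewrite <- RtoC_minus, Rminus_0_r, Cmod_R, Rabs_pos_eq in Hd by lra.
  rewrite H0 in Hd. specialize (HIm e). unfold Im in HIm.
  destruct (L (RtoC e)) as [a b]. simpl in HIm. subst b. simpl.
  replace (Cminus (Cminus (a, 0) (RtoC beta)) (Cmult (RtoC e) (RtoC 1)))
    with (RtoC (a - beta - e)) in Hd
    by (unfold Cminus, Cplus, Copp, Cmult, RtoC; simpl; f_equal; ring).
  rewrite Cmod_R in Hd. specialize (Hd ltac:(lra)).
  pose proof (Rle_abs (- (a - beta - e))). rewrite Rabs_Ropp in H. lra.
Qed.

Lemma Re_functional_equation (lam beta : R) (L : C -> C) :
  (forall z : C, E_lam lam (L z) = L (Cmult (RtoC beta) z)) ->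
  (forall x : R, Im (L (RtoC x)) = 0) ->
  forall x, Re (L (RtoC (beta * x))) = lam * exp (Re (L (RtoC x))).
Proof.
  intros Hfe HIm x.
  rewrite RtoC_mult, <- Hfe. specialize (HIm x). unfold Im in HIm.
  destruct (L (RtoC x)) as [a b]. simpl in *. subst b.
  unfold E_lam, Cexp, Cmult, RtoC; simpl. rewrite cos_0, sin_0. ring.
Qed.

Lemma bilipschitz_bounds (f : C -> C) (c Cc : R) :
  (forall x y : C, x <> y -> c <= Cmod (Cminus (f x) (f y)) / Cmod (Cminus x y) <= Cc) ->
  0 < c ->
  forall x y, c * Cmod (Cminus x y) <= Cmod (Cminus (f x) (f y)) <= Cc * Cmod (Cminus x y).
Proof.
  intros H Hc x y. destruct (classic (x = y)) as [->|Hxy].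
  { rewrite !Cmod_Cminus_diag. lra. }
  pose proof (Cmod_Cminus_gt0 _ _ Hxy) as Hpos. destruct (H x y Hxy) as [H1 H2].
  split; [apply (Rmult_le_reg_r (/ Cmod (Cminus x y)))|
          apply (Rmult_le_reg_r (/ Cmod (Cminus x y)))];
    try (apply Rinv_0_lt_compat; exact Hpos);
    rewrite Rmult_assoc, Rinv_r, Rmult_1_r by lra; assumption.
Qed.

Lemma left_inverse_on_image (f : C -> C) (c : R) (A : C -> Prop) :
  0 < c -> (forall x y, c * Cmod (Cminus x y) <= Cmod (Cminus (f x) (f y))) ->
  exists g : C -> C,
    (forall z, g (f z) = z) /\
    (forall x y, image f A x -> image f A y ->
       Cmod (Cminus (g x) (g y)) <= / c * Cmod (Cminus x y)).
Proof.
  intros Hc Hf.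
  assert (Hinj : forall x y, f x = f y -> x = y).
  { intros x y E. apply Ceq_minus, Cmod_eq_0. apply Rle_antisym; [|apply Cmod_ge_0].
    pose proof (Hf x y) as H. rewrite E, Cmod_Cminus_diag in H.
    pose proof (Cmod_ge_0 (Cminus x y)). nra. }
  set (g := fun w => epsilon (inhabits (RtoC 0)) (fun z => f z = w)).
  assert (Hg : forall z, g (f z) = z).
  { intros z. apply Hinj, (epsilon_spec (inhabits (RtoC 0)) (fun x => f x = f z)).
    now exists z. }
  exists g. split; [exact Hg|].
  intros x y [x' [_ ->]] [y' [_ ->]]. rewrite !Hg.
  apply Rmult_le_reg_l with c; [exact Hc|].
  rewrite <- Rmult_assoc, Rinv_r, Rmult_1_l by lra. apply Hf.
Qed.

Theorem mainTheorem4
  (lam gam beta : R) (L : C -> C) (Phi : R -> R)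
  (A : C -> Prop) (f : C -> C) (c Cc : R) :
  0 < lam < exp (-1) -> 0 < gam ->
  (* beta = beta_lambda: the real repelling fixed point of E_lambda *)
  lam * exp beta = beta -> 1 < lam * exp beta ->
  (* L = L_lambda *)
  entire L -> L (RtoC 0) = RtoC beta ->
  is_derive (K := C_AbsRing) (V := C_NormedModule) L (RtoC 0) (RtoC 1) ->
  (forall z : C, E_lam lam (L z) = L (Cmult (RtoC beta) z)) ->
  (* Phi = (L restricted to R)^{-1} *)
  (forall x : R, Im (L (RtoC x)) = 0 /\ Phi (Re (L (RtoC x))) = x) ->
  (* f bilipschitz *)
  0 < c < Cc ->
  (forall x y : C, x <> y ->
     c <= Cmod (Cminus (f x) (f y)) / Cmod (Cminus x y) <= Cc) ->
  (Hmeas (gauge Phi gam) A = Finite 0 ->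
     Hmeas (gauge Phi gam) (image f A) = Finite 0) /\
  (Hmeas (gauge Phi gam) A = p_infty ->
     Hmeas (gauge Phi gam) (image f A) = p_infty).
Proof.
  intros Hlam Hgam Hbeta Hbeta1 HL HL0 HL'0 Hfe HPhi Hc Hbl.
  assert (HIm : forall x, Im (L (RtoC x)) = 0) by (intros x; apply HPhi).
  destruct (Re_gt_at_right L beta HL0 HL'0 HIm) as [eps [Heps Hleps]].
  assert (Hev : eventually_pos_increasing Phi).
  { apply (Phi_eventually_pos_increasing lam beta eps (fun x => Re (L (RtoC x))));
      try lra; auto.
    - apply entire_Re_continuous, HL.
    - intros x. apply HPhi.
    - simpl. rewrite HL0. reflexivity.
    - apply Re_functional_equation; auto. }
  pose proof (bilipschitz_bounds f c Cc Hbl ltac:(lra)) as Hf.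
  pose proof (Hmeas_ge0 (gauge Phi gam) (image f A) (gauge_nonneg Phi gam)) as Hpos.
  split.
  - intros HA.
    destruct (gauge_Hmeas_lipschitz_image_le Phi gam f A (image f A) Cc Hev ltac:(lra)
                ltac:(lra) (fun x y _ _ => proj2 (Hf x y)) (fun y Hy => Hy)) as [K [_ HK]].
    apply Rbar_le_antisym; [|exact Hpos].
    rewrite <- (Rmult_0_r K). apply HK. rewrite HA. apply Rle_refl.
  - intros HA.
    destruct (left_inverse_on_image f c A ltac:(lra) (fun x y => proj1 (Hf x y)))
      as [g [Hgf Hg]].
    destruct (gauge_Hmeas_lipschitz_image_le Phi gam g (image f A) A (/ c) Hev ltac:(lra)
                ltac:(left; apply Rinv_0_lt_compat; lra) Hg) as [K [_ HK]].
    { intros z Hz. exists (f z). split; [now exists z|now rewrite Hgf]. }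
    destruct (Hmeas (gauge Phi gam) (image f A)) as [m| |]; [|reflexivity|contradiction].
    rewrite HA in HK. destruct (HK m (Rle_refl m)).
Qed.
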